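(* Let $\rho$ be a (complex) measure on the unit circle $S^1$, fix parameters $t=(t_i)_{i\ge1}$, $s=(s_i)_{i\ge1}$, and consider the bilinear form $\langle f,g\rangle=\oint_{S^1}\frac{\rho(dz)}{2\pi i z}f(z)g(z^{-1})e^{\sum_{i\ge1}(t_iz^i-s_iz^{-i})}$ on polynomials. Assume $\tau_n=\det(\langle z^k,z^\ell\rangle)_{0\le k,\ell\le n-1}\neq0$ for all $n\ge1$ ($\tau_0=1$), put $h_n=\tau_{n+1}/\tau_n$, and let $p^{(1)}_n,p^{(2)}_n$ ($n\ge0$) be the unique monic polynomials of degree $n$ with $\langle p^{(1)}_n,p^{(2)}_m\rangle=\delta_{nm}h_n$. Let $L_1$ and $M_2$ be the semi-infinite matrices (indices from $0$) defined by $zp^{(1)}_n(z)=\sum_m (L_1)_{n,m}p^{(1)}_m(z)$ and $zp^{(2)}_n(z)=\sum_m(M_2)_{n,m}p^{(2)}_m(z)$. Then for all $n\ge0$: $(L_1)_{n,n+1}=(M_2)_{n,n+1}=1$, $(L_1)_{n,m}=(M_2)_{n,m}=0$ for $m\ge n+2$, and for $0\le m\le n$, $$(L_1)_{n,m}=-\,h_n\,p^{(1)}_{n+1}(0)\,h_m^{-1}\,p^{(2)}_m(0),\qquad (M_2)_{n,m}=-\,h_n\,p^{(2)}_{n+1}(0)\,h_m^{-1}\,p^{(1)}_m(0).$$ Equivalently, $L_1=-\big(h\,p^{(1)}_\Lambda(0)\otimes h^{-1}p^{(2)}(0)\big)_{-0}+\Lambda$ and $M_2=-\big(h\,p^{(2)}_\Lambda(0)\otimes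 h^{-1}p^{(1)}(0)\big)_{-0}+\Lambda$.
   Context: $h=\operatorname{diag}(h_0,h_1,\dots)$; $p^{(i)}(0)=(p^{(i)}_0(0),p^{(i)}_1(0),\dots)$, $p^{(i)}_\Lambda(0)=(p^{(i)}_1(0),p^{(i)}_2(0),\dots)$; $u\otimes v$ is the matrix $(u_nv_m)$; $B_{-0}$ denotes the lower-triangular part of $B$ including the diagonal; $\Lambda$ is the shift matrix $\Lambda_{ij}=\delta_{j-i,1}$. (In the 2-Toda notation of the paper, $M_2=hL_2^{\top}h^{-1}$.) *)

From HB Require Import structures.
From mathcomp Require Import all_boot all_order all_algebra.
From mathcomp Require Import complex.
From mathcomp Require Import reals.
Set Implicit Arguments. Unset Strict Implicit. Unset Printing Implicit Defensive.
Import Order.TTheory GRing.Theory Num.Theory.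
Local Open Scope ring_scope.

(* The bilinear form on polynomials
     <f, g> = \oint rho(dz)/(2 pi i z) f(z) g(z^-1) exp(sum_i (t_i z^i - s_i z^-i))
   is entirely determined by its moments
     c j = \oint rho(dz)/(2 pi i z) z^j exp(sum_i (t_i z^i - s_i z^-i)),  j : int,
   since <z^k, z^l> = c (k - l). *)
Definition toep_form (C : ringType) (c : int -> C) (f g : {poly C}) : C :=
  \sum_(k < size f) \sum_(l < size g) f`_k * g`_l * c (k%:Z - l%:Z).

Definition tau (C : comRingType) (c : int -> C) (n : nat) : C :=
  \det (\matrix_(k < n, l < n) toep_form c 'X^k 'X^l).

Definition hcoef (C : fieldType) (c : int -> C) (n : nat) : C :=
  tau c n.+1 / tau c n.

Definition mult_by_z_matrix (C : ringType) (p : nat -> {poly C})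
  (A : nat -> nat -> C) : Prop :=
  forall n, exists N : nat,
    (forall m, (N <= m)%N -> A n m = 0) /\
    'X * p n = \sum_(m < N) A n m *: p m.

(* Since <z f, z g> = <f, g>, the entry L_{n,m} h_m of the matrix of
   multiplication by z equals <z p_n, q_m>.  Splitting q_m = q_m(0) + z q~_m with
   deg q~_m < m, biorthogonality kills <p_n, q~_m> for m <= n, so that
   L_{n,m} = A_n q_m(0) / h_m with A_n = <z p_n, 1>.  Evaluating
   z p_n = sum_m L_{n,m} p_m at z = 0 gives A_n K_n + p_{n+1}(0) = 0, where
   K_n = sum_{m<=n} p_m(0) q_m(0) / h_m, and the same splitting applied to q_{n+1}
   gives h_{n+1} = h_n + q_{n+1}(0) A_n.  Together these show K_n = 1 / h_n by
   induction, hence A_n = - p_{n+1}(0) h_n.  The statement for M_2 is the same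
   one for the transposed form, the Toeplitz form of the moments c(-j). *)

From HB Require Import structures.
From mathcomp Require Import all_boot all_order all_algebra.
From mathcomp Require Import ring zify.
From mathcomp Require Import complex.
From mathcomp Require Import reals.
Import Order.TTheory GRing.Theory Num.Theory.
Local Open Scope ring_scope.

Set Implicit Arguments.
Unset Strict Implicit.
Unset Printing Implicit Defensive.

Lemma sum_ord_vanishing_tail (V : nmodType) (N K : nat) (G : nat -> V) :
  (forall m, (N <= m)%N -> G m = 0) -> (forall m, (K <= m)%N -> G m = 0) ->
  \sum_(m < N) G m = \sum_(m < K) G m.
Proof.
wlog le_NK : N K / (N <= K)%N.
  by move=> gen GN GK; case/orP: (leq_total N K) => ?; [|symmetry]; apply: gen.
move=> GN _; rewrite -(subnKC le_NK) big_split_ord /= [X in _ + X]big1 ?addr0 //.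
by move=> i _; rewrite GN // leq_addr.
Qed.

Lemma coef_monic_size (C : nzSemiRingType) (p : {poly C}) n :
  p \is monic -> size p = n.+1 -> p`_n = 1.
Proof. by move=> /monicP + sp; rewrite lead_coefE sp. Qed.

Lemma size_subZ_monic (C : nzRingType) (p f : {poly C}) k :
  p \is monic -> size p = k.+1 -> (size f <= k.+1)%N ->
  (size (f - f`_k *: p)%R <= k)%N.
Proof.
move=> mon_p sp sf; apply/leq_sizeP => j; rewrite leq_eqVlt => /orP [/eqP <-|lt_kj].
  by rewrite coefB coefZ (coef_monic_size mon_p sp) mulr1 subrr.
have /leq_sizeP f_j := leq_trans sf lt_kj.
have /leq_sizeP p_j : (size p <= j)%N by rewrite sp.
by rewrite coefB coefZ f_j // p_j // mulr0 subr0.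
Qed.

Lemma poly_coef0_drop1 (C : nzSemiRingType) (g : {poly C}) :
  g = (g`_0)%:P + 'X * drop_poly 1 g.
Proof.
by apply/polyP => -[|i]; rewrite coefD coefC coefXM coef_drop_poly ?addr0 ?add0r ?addn1.
Qed.

Lemma size_mulX_le (C : nzSemiRingType) (f : {poly C}) :
  (size ('X * f)%R <= (size f).+1)%N.
Proof. by apply: leq_trans (size_polyMleq _ _) _; rewrite size_polyX. Qed.

Section LeftLinearForm.

Variables (C : fieldType) (F : {poly C} -> {poly C} -> C).
Hypothesis F_addl : forall g f1 f2, F (f1 + f2) g = F f1 g + F f2 g.
Hypothesis F_scalel : forall a f g, F (a *: f) g = a * F f g.

Lemma form0l g : F 0 g = 0.
Proof. by rewrite -(scale0r (0 : {poly C})) F_scalel mul0r. Qed.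

Lemma form_suml g (I : Type) (r : seq I) (P : pred I) (G : I -> {poly C}) :
  F (\sum_(i <- r | P i) G i) g = \sum_(i <- r | P i) F (G i) g.
Proof. exact: (big_morph (F^~ g) (F_addl g) (form0l g)). Qed.

Variables (p q : nat -> {poly C}) (h : nat -> C).
Hypothesis p_monic : forall n, p n \is monic /\ size (p n) = n.+1.
Hypothesis biorth : forall n m, F (p n) (q m) = (n == m)%:R * h n.

Lemma biorth_lt_deg_eq0 k (f : {poly C}) : (size f <= k)%N -> F f (q k) = 0.
Proof.
suff: forall j (f : {poly C}), (size f <= j)%N -> forall k, (j <= k)%N -> F f (q k) = 0.
  by move=> /(_ k f) + sf; apply.
elim=> [|j IHj] {}f sf {}k le_jk.
  by move: sf; rewrite leqn0 size_poly_eq0 => /eqP ->; rewrite form0l.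
have [mon_p sp] := p_monic j.
rewrite -{1}(subrK (f`_j *: p j) f) F_addl IHj ?size_subZ_monic ?(ltnW le_jk) //.
by rewrite F_scalel biorth (ltn_eqF le_jk) mul0r mulr0 add0r.
Qed.

Lemma biorth_le_deg k (f : {poly C}) : (size f <= k.+1)%N -> F f (q k) = f`_k * h k.
Proof.
move=> sf; have [mon_p sp] := p_monic k.
rewrite -{1}(subrK (f`_k *: p k) f) F_addl biorth_lt_deg_eq0 ?size_subZ_monic //.
by rewrite F_scalel biorth eqxx mul1r add0r.
Qed.

End LeftLinearForm.

Section ShiftInvariantForm.

Variables (C : fieldType) (F : {poly C} -> {poly C} -> C).
Hypothesis F_addl : forall g f1 f2, F (f1 + f2) g = F f1 g + F f2 g.
Hypothesis F_scalel : forall a f g, F (a *: f) g = a * F f g.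
Hypothesis F_addr : forall f g1 g2, F f (g1 + g2) = F f g1 + F f g2.
Hypothesis F_scaler : forall a f g, F f (a *: g) = a * F f g.
Hypothesis F_mulX : forall f g, F ('X * f) ('X * g) = F f g.

Variables (p q : nat -> {poly C}) (h : nat -> C) (L : nat -> nat -> C).
Hypothesis h_neq0 : forall n, h n != 0.
Hypothesis p_monic : forall n, p n \is monic /\ size (p n) = n.+1.
Hypothesis q_monic : forall n, q n \is monic /\ size (q n) = n.+1.
Hypothesis biorth : forall n m, F (p n) (q m) = (n == m)%:R * h n.
Hypothesis L_mulX : mult_by_z_matrix p L.

Lemma biorth_tr n m : F (p m) (q n) = (n == m)%:R * h n.
Proof. by rewrite biorth eq_sym; case: eqP => [->|]; rewrite ?mul0r. Qed.

Lemma form_lt_deg_eq0l k (f : {poly C}) : (size f <= k)%N -> F f (q k) = 0.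
Proof. exact: (biorth_lt_deg_eq0 F_addl F_scalel p_monic biorth). Qed.

Lemma form_le_degl k (f : {poly C}) : (size f <= k.+1)%N -> F f (q k) = f`_k * h k.
Proof. exact: (biorth_le_deg F_addl F_scalel p_monic biorth). Qed.

Lemma form_lt_deg_eq0r k (g : {poly C}) : (size g <= k)%N -> F (p k) g = 0.
Proof.
exact: (biorth_lt_deg_eq0 (F := fun f g => F g f) F_addr
  (fun a f g => F_scaler a g f) q_monic biorth_tr).
Qed.

Lemma form_le_degr k (g : {poly C}) : (size g <= k.+1)%N -> F (p k) g = g`_k * h k.
Proof.
exact: (biorth_le_deg (F := fun f g => F g f) F_addr
  (fun a f g => F_scaler a g f) q_monic biorth_tr).
Qed.

Lemma p_coef_deg n : (p n)`_n = 1.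
Proof. exact: coef_monic_size (p_monic n).1 (p_monic n).2. Qed.

Lemma q_coef_deg n : (q n)`_n = 1.
Proof. exact: coef_monic_size (q_monic n).1 (q_monic n).2. Qed.

Lemma size_mulX_p n : (size ('X * p n)%R <= n.+2)%N.
Proof. by apply: leq_trans (size_mulX_le _) _; rewrite (p_monic n).2. Qed.

Lemma mulX_coef_mulh n k : L n k * h k = F ('X * p n) (q k).
Proof.
have [N [L_eq0 ->]] := L_mulX n.
rewrite (form_suml F_addl F_scalel); under eq_bigr do rewrite F_scalel biorth.
rewrite (@sum_ord_vanishing_tail _ N k.+1 (fun m => L n m * ((m == k)%:R * h m))).
- rewrite big_ord_recr /= eqxx mul1r big1 ?add0r // => i _.
  by rewrite (ltn_eqF (ltn_ord i)) mul0r mulr0.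
- by move=> m Nm; rewrite L_eq0 // mul0r.
- by move=> m km; rewrite (gtn_eqF km) mul0r mulr0.
Qed.

Lemma mulX_coef_succ n : L n n.+1 = 1.
Proof.
apply: (mulIf (h_neq0 n.+1)).
rewrite mulX_coef_mulh mul1r form_le_degl ?size_mulX_p //.
by rewrite coefXM /= p_coef_deg mul1r.
Qed.

Lemma mulX_coef_eq0 n m : (n.+1 < m)%N -> L n m = 0.
Proof.
move=> lt_n1m; apply: (mulIf (h_neq0 m)).
by rewrite mulX_coef_mulh mul0r form_lt_deg_eq0l // (leq_trans (size_mulX_p n)).
Qed.

Lemma mulX_expansion n : 'X * p n = \sum_(m < n.+2) L n m *: p m.
Proof.
have [N [L_eq0 ->]] := L_mulX n.
apply: (@sum_ord_vanishing_tail _ _ _ (fun m => L n m *: p m)) => m m_ge.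
  by rewrite L_eq0 ?scale0r.
by rewrite mulX_coef_eq0 ?scale0r.
Qed.

Lemma form_split_coef0 f k :
  F f (q k) = (q k).[0] * F f 1 + F f ('X * drop_poly 1 (q k)).
Proof.
by rewrite {1}(poly_coef0_drop1 (q k)) F_addr -alg_polyC F_scaler horner_coef0.
Qed.

Lemma mulX_coef_le n k : (k <= n)%N -> L n k * h k = (q k).[0] * F ('X * p n) 1.
Proof.
move=> le_kn; rewrite mulX_coef_mulh form_split_coef0 F_mulX form_lt_deg_eq0r ?addr0 //.
by rewrite size_drop_poly (q_monic k).2 subn1.
Qed.

Lemma h_succ n : h n.+1 = h n + (q n.+1).[0] * F ('X * p n) 1.
Proof.
have := form_le_degl (size_mulX_p n); rewrite coefXM /= p_coef_deg mul1r => <-.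
rewrite form_split_coef0 F_mulX form_le_degr; last by rewrite size_drop_poly (q_monic _).2.
by rewrite coef_drop_poly addn1 q_coef_deg mul1r addrC.
Qed.

Lemma mulX_horner0 n :
  F ('X * p n) 1 * (\sum_(k < n.+1) (p k).[0] * (q k).[0] / h k) + (p n.+1).[0] = 0.
Proof.
have := congr1 (horner^~ 0) (mulX_expansion n).
rewrite /= horner_coef0 coefXM /= horner_sum big_ord_recr /= hornerZ mulX_coef_succ mul1r.
move=> eq0; rewrite [RHS]eq0; congr (_ + _); rewrite mulr_sumr; apply: eq_bigr => m _.
rewrite hornerZ -(mulfK (h_neq0 m) (L n m)).
by rewrite (mulX_coef_le (n := n) (k := m) (ltn_ord m)); ring.
Qed.

Lemma form_mulX_1_kernel0 n :
  \sum_(k < n.+1) (p k).[0] * (q k).[0] / h k = (h n)^-1 ->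
  F ('X * p n) 1 = - ((p n.+1).[0] * h n).
Proof.
move=> kernelE; have /eqP := mulX_horner0 n.
by rewrite kernelE addr_eq0 => /eqP eq_p0; rewrite -mulNr -eq_p0 mulfVK.
Qed.

Lemma kernel0_eq n : \sum_(k < n.+1) (p k).[0] * (q k).[0] / h k = (h n)^-1.
Proof.
elim: n => [|n IHn].
  by rewrite big_ord1 !horner_coef0 p_coef_deg q_coef_deg !mul1r.
have h1_neq0 := h_neq0 n.+1; have h0_neq0 := h_neq0 n.
rewrite big_ord_recr /= IHn; rewrite h_succ form_mulX_1_kernel0 // in h1_neq0 *.
by field; rewrite h1_neq0 h0_neq0.
Qed.

Lemma mulX_coef_lower n m :
  (m <= n)%N -> L n m = - (h n * (p n.+1).[0] * (h m)^-1 * (q m).[0]).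
Proof.
move=> le_mn; rewrite -(mulfK (h_neq0 m) (L n m)) mulX_coef_le //.
by rewrite form_mulX_1_kernel0 ?kernel0_eq //; ring.
Qed.

Lemma mulX_matrix_shape n :
  [/\ L n n.+1 = 1, forall m, (n.+1 < m)%N -> L n m = 0 &
      forall m, (m <= n)%N -> L n m = - (h n * (p n.+1).[0] * (h m)^-1 * (q m).[0])].
Proof.
by split=> [|m|m]; [exact: mulX_coef_succ | exact: mulX_coef_eq0 | exact: mulX_coef_lower].
Qed.

End ShiftInvariantForm.

Lemma toep_form_widen (C : comNzRingType) (c : int -> C) (f g : {poly C}) N M :
  (size f <= N)%N -> (size g <= M)%N ->
  toep_form c f g = \sum_(k < N) \sum_(l < M) f`_k * g`_l * c (k%:Z - l%:Z).
Proof.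
move=> sf sg; rewrite /toep_form (@sum_ord_vanishing_tail _ (size f) N
  (fun k => \sum_(l < size g) f`_k * g`_l * c (k%:Z - l%:Z))) => [|k|k].
- apply: eq_bigr => k _.
  apply: (@sum_ord_vanishing_tail _ _ _ (fun l => f`_k * g`_l * c (k%:Z - l%:Z))) => l gl.
    by rewrite (nth_default 0 gl) mulr0 mul0r.
  by rewrite (nth_default 0 (leq_trans sg gl)) mulr0 mul0r.
- by move=> fk; rewrite big1 // => l _; rewrite (nth_default 0 fk) !mul0r.
- by move=> Nk; rewrite big1 // => l _; rewrite (nth_default 0 (leq_trans sf Nk)) !mul0r.
Qed.

Lemma toep_formDl (C : comNzRingType) (c : int -> C) g f1 f2 :
  toep_form c (f1 + f2) g = toep_form c f1 g + toep_form c f2 g.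
Proof.
pose N := maxn (size f1) (size f2).
rewrite !(@toep_form_widen _ c _ _ N (size g)) ?leq_maxl ?leq_maxr ?size_polyD //.
rewrite -big_split; apply: eq_bigr => k _; rewrite -big_split; apply: eq_bigr => l _.
by rewrite coefD !mulrDl.
Qed.

Lemma toep_formZl (C : comNzRingType) (c : int -> C) a f g :
  toep_form c (a *: f) g = a * toep_form c f g.
Proof.
rewrite !(@toep_form_widen _ c _ _ (size f) (size g)) ?size_scale_leq // mulr_sumr.
by apply: eq_bigr => k _; rewrite mulr_sumr; apply: eq_bigr => l _; rewrite coefZ !mulrA.
Qed.

Lemma toep_form_tr (C : comNzRingType) (c c' : int -> C) f g :
  (forall j, c' j = c (- j)) -> toep_form c' g f = toep_form c f g.
Proof.
move=> c'E; rewrite /toep_form exchange_big; apply: eq_bigr => k _.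
by apply: eq_bigr => l _; rewrite c'E opprB [g`_l * _]mulrC.
Qed.

Lemma toep_formDr (C : comNzRingType) (c : int -> C) f g1 g2 :
  toep_form c f (g1 + g2) = toep_form c f g1 + toep_form c f g2.
Proof.
by rewrite !(@toep_form_tr _ (fun j => c (- j)) c) ?toep_formDl // => j; rewrite opprK.
Qed.

Lemma toep_formZr (C : comNzRingType) (c : int -> C) a f g :
  toep_form c f (a *: g) = a * toep_form c f g.
Proof.
by rewrite !(@toep_form_tr _ (fun j => c (- j)) c) ?toep_formZl // => j; rewrite opprK.
Qed.

Lemma toep_form_mulX (C : comNzRingType) (c : int -> C) f g :
  toep_form c ('X * f) ('X * g) = toep_form c f g.
Proof.
rewrite (@toep_form_widen _ c _ _ (size f).+1 (size g).+1) ?size_mulX_le //.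
rewrite big_ord_recl big1 ?add0r => [|l _]; last by rewrite coefXM !mul0r.
apply: eq_bigr => k _; rewrite big_ord_recl !coefXM /= mulr0 mul0r add0r.
apply: eq_bigr => l _; rewrite !coefXM /=.
congr (_ * _ * c _); rewrite /bump /=; lia.
Qed.

Lemma hcoef_neq0 (C : fieldType) (c : int -> C) :
  (forall n, (0 < n)%N -> tau c n != 0) -> forall n, hcoef c n != 0.
Proof.
move=> tau_neq0 n; have tau_n : tau c n != 0.
  by case: n => [|n]; [rewrite /tau det_mx00 oner_neq0 | exact: tau_neq0].
by rewrite /hcoef mulf_neq0 ?invr_neq0 // tau_neq0.
Qed.

Theorem theorem2p7 (R : realType) (c : int -> R[i])
  (p1 p2 : nat -> {poly R[i]}) (L1 M2 : nat -> nat -> R[i]) :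
  (forall n, (0 < n)%N -> tau c n != 0) ->
  (forall n, p1 n \is monic /\ size (p1 n) = n.+1) ->
  (forall n, p2 n \is monic /\ size (p2 n) = n.+1) ->
  (forall n m, toep_form c (p1 n) (p2 m) = (n == m)%:R * hcoef c n) ->
  mult_by_z_matrix p1 L1 ->
  mult_by_z_matrix p2 M2 ->
  forall n : nat,
    [/\ L1 n n.+1 = 1, M2 n n.+1 = 1,
        (forall m, (n.+2 <= m)%N -> L1 n m = 0 /\ M2 n m = 0) &
        (forall m, (m <= n)%N ->
           L1 n m = - (hcoef c n * (p1 n.+1).[0] * (hcoef c m)^-1 * (p2 m).[0])
        /\ M2 n m = - (hcoef c n * (p2 n.+1).[0] * (hcoef c m)^-1 * (p1 m).[0]))].
Proof.
move=> tau_neq0 p1_monic p2_monic biorth mulX_p1 mulX_p2 n.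
have h_neq0 := hcoef_neq0 tau_neq0.
have biorth21 k m : toep_form (fun j => c (- j)) (p2 k) (p1 m) = (k == m)%:R * hcoef c k.
  by rewrite (toep_form_tr (c := c)) // (biorth_tr biorth).
have [L1_succ L1_eq0 L1_lower] := mulX_matrix_shape
  (toep_formDl c) (toep_formZl c) (toep_formDr c) (toep_formZr c) (toep_form_mulX c)
  h_neq0 p1_monic p2_monic biorth mulX_p1 n.
have [M2_succ M2_eq0 M2_lower] := mulX_matrix_shape
  (toep_formDl _) (toep_formZl _) (toep_formDr _) (toep_formZr _) (toep_form_mulX _)
  h_neq0 p2_monic p1_monic biorth21 mulX_p2 n.
by split=> // m le_m; split;
  [exact: L1_eq0 | exact: M2_eq0 | exact: L1_lower | exact: M2_lower].
Qed.
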